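(* Let $d\ge2$, let $K$ be a number field, let $\mathbf A,\mathbf B\in K[t]$ be nonzero coprime polynomials and $\mathbf c=\mathbf A/\mathbf B$. Let $v\in\Omega_{\mathbb Q}$ be a non-archimedean place such that (i) every coefficient of $\mathbf A$ and of $\mathbf B$ is a $v$-adic integer; (ii) the resultant of $\mathbf A$ and $\mathbf B$ and the leading coefficients of $\mathbf A$ and of $\mathbf B$ are $v$-adic units; (iii) if the constant coefficient $a_0$ of $\mathbf A$ is nonzero, then $a_0$ is a $v$-adic unit. Then for each $\lambda\in\overline{\mathbb Q}^*$, $$\frac{\log M_{\mathbf c,n,v}(\lambda)}{d^n}=\frac{\log M_{\mathbf c,1,v}(\lambda)}{d}\quad\text{for all }n\ge1.$$
   Context: For each $v\in\Omega_{\mathbb Q}$ a fixed extension of $|\cdot|_v$ to $\overline{\mathbb Q}$ is used; $x$ is a $v$-adic integer if $|x|_v\le1$ and a $v$-adic unit if $|x|_v=1$. The polynomials $\mathbf A_{\mathbf c,n},\mathbf B_{\mathbf c,n}$ are defined by: $\mathbf A_{\mathbf c,0}=\mathbf A$, $\mathbf B_{\mathbf c,0}=\mathbf B$; if $\mathbf A(0)\neq0$ then $\mathbf A_{\mathbf c,1}=\mathbf A^d+t\mathbf B^d$, $\mathbf B_{\mathbf c,1}=\mathbf A\mathbf B^{d-1}$, while if $\mathbf A(0)=0$ then $\mathbf A_{\mathbf c,1}=(\mathbf A^d+t\mathbf B^d)/t$, $\mathbf B_{\mathbf c,1}=\mathbf A\mathbf B^{d-1}/t$; for $n\ge1$, $\mathbf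 A_{\mathbf c,n+1}=\mathbf A_{\mathbf c,n}^d+t\mathbf B_{\mathbf c,n}^d$, $\mathbf B_{\mathbf c,n+1}=\mathbf A_{\mathbf c,n}\mathbf B_{\mathbf c,n}^{d-1}$. Finally $M_{\mathbf c,n,v}(\lambda)=\max\{|\mathbf A_{\mathbf c,n}(\lambda)|_v,|\mathbf B_{\mathbf c,n}(\lambda)|_v\}$. *)

From HB Require Import structures.
From mathcomp Require Import all_boot all_order all_algebra all_field.
From mathcomp Require Import reals exp.
Set Implicit Arguments. Unset Strict Implicit. Unset Printing Implicit Defensive.
Import Order.TTheory GRing.Theory Num.Theory.
Local Open Scope ring_scope.

(* Qbar is modelled by algC (the algebraic closure of Q).  A non-archimedean
   place v of Q, together with a fixed extension of |.|_v to Qbar, is a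
   prime p together with an absolute value on algC that is multiplicative,
   ultrametric, positive definite and normalized by |p|_v = 1/p (so that its
   restriction to Q is the usual p-adic absolute value). *)
Definition is_padic_abs (R : realType) (p : nat) (abs : algC -> R) : Prop :=
  [/\ prime p,
      (forall x : algC, abs x = 0 <-> x = 0),
      (forall x : algC, 0 <= abs x),
      (forall x y : algC, abs (x * y) = abs x * abs y)
    & (forall x y : algC, abs (x + y) <= Num.max (abs x) (abs y))
      /\ abs (p%:R) = (p%:R)^-1].

Fixpoint ABc (d : nat) (A B : {poly algC}) (n : nat) : {poly algC} * {poly algC} :=
  match n with
  | 0 => (A, B)
  | 1 => if A.[0] != 0 then (A ^+ d + 'X * B ^+ d, A * B ^+ d.-1)
         else ((A ^+ d + 'X * B ^+ d) %/ 'X, (A * B ^+ d.-1) %/ 'X)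
  | m.+1 => let ab := ABc d A B m in
            (ab.1 ^+ d + 'X * ab.2 ^+ d, ab.1 * ab.2 ^+ d.-1)
  end.

Definition Acn d A B n := (ABc d A B n).1.
Definition Bcn d A B n := (ABc d A B n).2.

Definition Mcnv (R : realType) (abs : algC -> R) d A B n (lam : algC) : R :=
  Num.max (abs (Acn d A B n).[lam]) (abs (Bcn d A B n).[lam]).

From HB Require Import structures.
From mathcomp Require Import all_boot all_order all_algebra all_field.
From mathcomp Require Import reals exp.
From mathcomp Require Import ring lra zify.
Import Order.TTheory GRing.Theory Num.Theory.
Local Open Scope ring_scope.
Set Implicit Arguments. Unset Strict Implicit.

(* Write (a, b) |-> (a^d + lam b^d, a b^(d-1)) for the step producing
   (A_{n+1}(lam), B_{n+1}(lam)) from (A_n(lam), B_n(lam)).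
   If |lam| > 1, unit leading coefficients give |A(lam)| = |lam|^deg A and
   |B(lam)| = |lam|^deg B; after one step |lam| |B_n|^d < |A_n|^d, a condition the
   step preserves, and then M_{n+1} = |A_{n+1}| = |A_n|^d = M_n^d.
   If |lam| <= 1, integrality and the unit resultant force
   max(|A(lam)|, |B(lam)|) = 1 (Cramer's rule on the Sylvester matrix); the unit
   constant coefficient of A (of B when A(0) = 0, again by the resultant) keeps
   the orbit primitive, so M_n = 1 for all n >= 1.
   Either way M_{n+1} = M_n^d for n >= 1. *)

Lemma Sylvester_mx_col_powers (K : nzRingType) (A B : {poly K}) (x : K) i :
  (Sylvester_mx A B *m \col_j x ^+ j) i 0 =
  match split i with inl k => ('X^k * A).[x] | inr k => ('X^k * B).[x] end.
Proof.
set N := ((size B).-1 + (size A).-1)%N.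
have row_horner (P : {poly K}) (k : nat) : (size ('X^k * P)%R <= N)%N ->
    \sum_(j < N) P`_(j - k) *+ (k <= j) * (\col_j x ^+ j : 'cV_N) j 0 = ('X^k * P).[x].
  move=> szP; rewrite (horner_coef_wide _ szP); apply: eq_bigr => j _.
  by rewrite coefXnM !mxE; case: ltnP => /= _; rewrite ?mulr0n ?mulr1n ?mul0r.
rewrite mxE; under eq_bigr do rewrite Sylvester_mxE.
case: (split i) => k /=; apply: row_horner;
  apply: leq_trans (size_polyMleq _ _) _; rewrite size_polyXn /N;
  have := ltn_ord k; set a := size A; set b := size B; lia.
Qed.

Lemma horner_ABc_succ d (A B : {poly algC}) n x : (1 <= n)%N ->
  (Acn d A B n.+1).[x] = (Acn d A B n).[x] ^+ d + x * (Bcn d A B n).[x] ^+ d /\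
  (Bcn d A B n.+1).[x] = (Acn d A B n).[x] * (Bcn d A B n).[x] ^+ d.-1.
Proof. by case: n => // n _; rewrite /Acn /Bcn /= hornerD !hornerM hornerX !horner_exp. Qed.

Lemma horner_ABc1 d (A B : {poly algC}) x : (0 < d)%N ->
  let s := if A.[0] == 0 then x else 1 in
  (Acn d A B 1).[x] * s = A.[x] ^+ d + x * B.[x] ^+ d /\
  (Bcn d A B 1).[x] * s = A.[x] * B.[x] ^+ d.-1.
Proof.
move=> d_gt0 /=; rewrite /Acn /Bcn /=.
have divXK (P : {poly algC}) : P.[0] = 0 -> (P %/ 'X).[x] * x = P.[x].
  move=> P0; have XdvdP : 'X %| P by rewrite -(subr0 'X) -polyC0 dvdp_XsubCl /root P0.
  by rewrite -{2}(divpK XdvdP) hornerM hornerX.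
case: eqP => [A0|_] /=; last by rewrite !mulr1 hornerD !hornerM hornerX !horner_exp.
rewrite !divXK ?hornerD ?hornerM ?hornerX ?horner_exp ?A0 ?mul0r ?addr0 //.
by rewrite expr0n gtn_eqF.
Qed.

Lemma dominant_exponent_lt d i j : (2 <= d)%N ->
  (((i + j * d.-1) * d).+1 < maxn (i * d) (j * d).+1 * d)%N.
Proof. by case: d => [|[|e]] // _; have [/subnKC <-|i_le_j] := ltnP j i; nia. Qed.

Section NonarchimedeanAbs.

Variables (R : realType) (p : nat) (abs : algC -> R).
Hypothesis habs : is_padic_abs p abs.

Lemma abs_ge0 x : 0 <= abs x. Proof. by case: habs. Qed.

Lemma abs_eq0 x : abs x = 0 <-> x = 0. Proof. by case: habs. Qed.

Lemma abs0 : abs 0 = 0. Proof. exact/abs_eq0. Qed.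

Lemma abs_gt0 x : x != 0 -> 0 < abs x.
Proof. by move=> x0; rewrite lt0r abs_ge0 andbT; apply: contra_neq x0 => /abs_eq0. Qed.

Lemma absM x y : abs (x * y) = abs x * abs y. Proof. by case: habs. Qed.

Lemma abs_ultra x y : abs (x + y) <= Num.max (abs x) (abs y).
Proof. by case: habs => _ _ _ _ []. Qed.

Lemma abs1 : abs 1 = 1.
Proof.
have abs1_neq0 : abs 1 != 0 by apply/eqP => /abs_eq0/eqP; rewrite oner_eq0.
by apply: (mulfI abs1_neq0); rewrite -absM !mulr1.
Qed.

Lemma absX x n : abs (x ^+ n) = abs x ^+ n.
Proof. by elim: n => [|n IHn]; rewrite ?abs1 // !exprS absM IHn. Qed.

Lemma absN x : abs (- x) = abs x.
Proof.
have absN1 : abs (-1) = 1.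
  have := absX (-1) 2; rewrite sqrrN expr1n abs1 => /esym/eqP.
  by rewrite sqrf_eq1 => /orP[/eqP //|/eqP]; have := abs_ge0 (-1); lra.
by rewrite -mulN1r absM absN1 mul1r.
Qed.

Lemma abs_addl_eq x y : abs y < abs x -> abs (x + y) = abs x.
Proof.
move=> yx; have le_xy := abs_ultra x y.
have := abs_ultra (x + y) (- y); rewrite addrK absN.
by move: le_xy; rewrite /Num.max; do 2 case: ifP => _; lra.
Qed.

Lemma abs_sum_le (I : Type) (r : seq I) (P : pred I) (F : I -> algC) (k : R) :
  0 <= k -> (forall i, P i -> abs (F i) <= k) -> abs (\sum_(i <- r | P i) F i) <= k.
Proof.
move=> k_ge0 leFk; apply: (big_ind (fun x => abs x <= k)); rewrite ?abs0 //.
by move=> x y xk yk; apply: le_trans (abs_ultra x y) _; rewrite ge_max xk.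
Qed.

Lemma abs_sum_lt (I : Type) (r : seq I) (P : pred I) (F : I -> algC) (k : R) :
  0 < k -> (forall i, P i -> abs (F i) < k) -> abs (\sum_(i <- r | P i) F i) < k.
Proof.
move=> k_gt0 ltFk; apply: (big_ind (fun x => abs x < k)); rewrite ?abs0 //.
by move=> x y xk yk; apply: le_lt_trans (abs_ultra x y) _; rewrite gt_max xk.
Qed.

Lemma abs_prod_le1 (I : Type) (r : seq I) (P : pred I) (F : I -> algC) :
  (forall i, P i -> abs (F i) <= 1) -> abs (\prod_(i <- r | P i) F i) <= 1.
Proof.
move=> leF1; apply: (big_ind (fun x => abs x <= 1)); rewrite ?abs1 //.
by move=> x y x1 y1; rewrite absM mulr_ile1 ?abs_ge0.
Qed.

Definition integral_poly (P : {poly algC}) : Prop := forall i, abs P`_i <= 1.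

Lemma abs_coefXn_le (P : {poly algC}) x i :
  integral_poly P -> abs (P`_i * x ^+ i) <= abs x ^+ i.
Proof. by move=> intP; rewrite absM absX ler_piMl ?exprn_ge0 ?abs_ge0. Qed.

Lemma integral_horner_le1 (P : {poly algC}) x :
  integral_poly P -> abs x <= 1 -> abs P.[x] <= 1.
Proof.
move=> intP x1; rewrite horner_coef; apply: abs_sum_le => // i _.
exact: le_trans (abs_coefXn_le _ _ intP) (exprn_ile1 _ (abs_ge0 _) x1).
Qed.

Lemma integral_horner_le_abs (P : {poly algC}) x :
  integral_poly P -> P`_0 = 0 -> abs x <= 1 -> abs P.[x] <= abs x.
Proof.
move=> intP P0 x1; rewrite horner_coef; apply: abs_sum_le => [|[[|i] ?] _].
- exact: abs_ge0.
- by rewrite P0 mul0r abs0 abs_ge0.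
apply: le_trans (abs_coefXn_le _ _ intP) _.
by rewrite exprS ler_piMr ?abs_ge0 ?exprn_ile1 ?abs_ge0.
Qed.

Lemma integral_horner_unit_coef0 (P : {poly algC}) x :
  integral_poly P -> abs P`_0 = 1 -> abs x < 1 -> abs P.[x] = 1.
Proof.
move=> intP P0 x1; have szP : (0 < size P)%N.
  by rewrite size_poly_gt0; apply: contra_eq_neq P0 => ->; rewrite coef0 abs0; lra.
rewrite horner_coef -(prednK szP) big_ord_recl expr0 mulr1 -P0.
apply: abs_addl_eq; rewrite P0; apply: abs_sum_lt => // i _.
apply: le_lt_trans (abs_coefXn_le _ _ intP) _.
by rewrite exprn_ilt1 ?abs_ge0.
Qed.

Lemma integral_horner_unit_lead (P : {poly algC}) x :
  integral_poly P -> abs (lead_coef P) = 1 -> 1 < abs x ->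
  abs P.[x] = abs x ^+ (size P).-1.
Proof.
move=> intP lcP x1; have szP : (0 < size P)%N.
  by rewrite size_poly_gt0; apply: contra_eq_neq lcP => ->; rewrite lead_coef0 abs0; lra.
have lead_term : abs (lead_coef P * x ^+ (size P).-1) = abs x ^+ (size P).-1.
  by rewrite absM lcP mul1r absX.
rewrite horner_coef -(prednK szP) big_ord_recr /= addrC.
rewrite -lead_coefE abs_addl_eq lead_term // -lead_term.
apply: abs_sum_lt => [|i _]; first by rewrite lead_term exprn_gt0 //; lra.
by apply: le_lt_trans (abs_coefXn_le _ _ intP) _; rewrite lead_term ltr_eXn2l.
Qed.

Lemma abs_det_le1 n (M : 'M[algC]_n) :
  (forall i j, abs (M i j) <= 1) -> abs (\det M) <= 1.
Proof.
move=> M1; apply: abs_sum_le => // s _.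
by rewrite absM absX absN abs1 expr1n mul1r; apply: abs_prod_le1 => i _.
Qed.

Lemma abs_adj_le1 n (M : 'M[algC]_n) :
  (forall i j, abs (M i j) <= 1) -> forall i j, abs (\adj M i j) <= 1.
Proof.
move=> M1 i j; rewrite mxE /cofactor absM absX absN abs1 expr1n mul1r.
by apply: abs_det_le1 => k l; rewrite !mxE.
Qed.

(* With S the Sylvester matrix and v = (x^j)_j, Cramer's rule gives
   Res(A, B) = (adj S *m S *m v)_0; the entries of adj S are integral and
   those of S *m v are the values x^k A(x), x^k B(x). *)
Lemma unit_resultant_max_horner_ge1 (A B : {poly algC}) x :
  integral_poly A -> integral_poly B -> abs (resultant A B) = 1 ->
  abs (lead_coef A) = 1 -> abs x <= 1 ->
  1 <= Num.max (abs A.[x]) (abs B.[x]).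
Proof.
move=> intA intB resAB lcA x1; set m := Num.max _ _.
have m_ge0 : 0 <= m by rewrite le_max abs_ge0.
have [dS|N_gt0] := posnP ((size B).-1 + (size A).-1)%N.
  have szA : size A = 1%N.
    have : A != 0 by apply: contra_eq_neq lcA => ->; rewrite lead_coef0 abs0; lra.
    by rewrite -size_poly_eq0; move: dS; set a := size A; set b := size B; lia.
  by rewrite le_max -lcA lead_coefE horner_coef szA big_ord1 expr0 mulr1 lexx.
move: resAB; rewrite /resultant; set S := Sylvester_mx A B.
pose v : 'cV[algC]_((size B).-1 + (size A).-1) := \col_j x ^+ j.
have Xn_le (y : algC) k : abs y <= m -> abs (x ^+ k * y) <= m.
  move=> ym; rewrite absM absX; apply: le_trans ym.
  by rewrite ler_piMl ?abs_ge0 ?exprn_ile1 ?abs_ge0.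
have Sv_le j : abs ((S *m v) j 0) <= m.
  rewrite Sylvester_mx_col_powers.
  by case: (split j) => k; rewrite hornerM hornerXn; apply: Xn_le; rewrite le_max lexx ?orbT.
have S_le1 i j : abs (S i j) <= 1.
  rewrite Sylvester_mxE; case: (split i) => k /=;
    by case: (k <= j)%N; rewrite ?mulr0n ?mulr1n ?abs0.
pose i0 := Ordinal N_gt0.
have -> : \det S = \sum_j \adj S i0 j * (S *m v) j 0.
  transitivity ((\det S *: v) i0 0); first by rewrite !mxE expr0 mulr1.
  by rewrite -mul_scalar_mx -mul_adj_mx -mulmxA mxE.
move=> <-; apply: abs_sum_le => // j _; rewrite absM.
by apply: le_trans (ler_wpM2r (abs_ge0 _) (abs_adj_le1 S_le1 i0 j)) _; rewrite mul1r.
Qed.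

Variable d : nat.
Hypothesis d_ge2 : (2 <= d)%N.

Let d_gt0 : (0 < d)%N. Proof. exact: leq_trans d_ge2. Qed.

(* The invariant of the orbit, read on L = |lam|, x = |A_n(lam)|, y = |B_n(lam)|:
   for |lam| > 1 the first coordinate dominates strongly enough to survive the
   next step; for |lam| <= 1 the pair is primitive, with a unit first
   coordinate when |lam| < 1. *)
Definition good_pair (L x y : R) : Prop :=
  if 1 < L then is_true (L * y ^+ d < x ^+ d)
  else Num.max x y = 1 /\ (L < 1 -> x = 1).

Lemma good_pair_max_gt0 (L x y : R) :
  0 <= x -> 0 <= y -> good_pair L x y -> 0 < Num.max x y.
Proof.
rewrite /good_pair; case: ifP => [L_gt1 x_ge0 y_ge0 dom|_ _ _ [-> _]] //.
have xd_gt0 : 0 < x ^+ d by apply: le_lt_trans dom; rewrite mulr_ge0 ?exprn_ge0 //; lra.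
rewrite lt_max lt0r x_ge0 andbT; apply/orP; left; apply/eqP => x0.
by move: xd_gt0; rewrite x0 expr0n gtn_eqF // ltxx.
Qed.

Lemma good_pair_divr (L x y c : R) :
  0 < c -> (L <= 1 -> c = 1) -> good_pair L (x * c) (y * c) -> good_pair L x y.
Proof.
rewrite /good_pair; case: ifP => [_ c_gt0 _|/negbT]; last first.
  by rewrite -leNgt => L_le1 _ /(_ L_le1) ->; rewrite !mulr1.
by rewrite !exprMn mulrA ltr_pM2r // exprn_gt0.
Qed.

Lemma dominant_step (L x y : R) : 1 < L -> 0 <= x -> 0 <= y -> L * y ^+ d < x ^+ d ->
  [/\ y < x, x * y ^+ d.-1 <= x ^+ d & L * (x * y ^+ d.-1) ^+ d < (x ^+ d) ^+ d].
Proof.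
move=> L_gt1 x_ge0 y_ge0 dom.
have y_lt_x : y < x.
  rewrite ltNge; apply/negP => x_le_y; move: dom; apply/negP; rewrite -leNgt.
  apply: le_trans (lerXn2r _ _ _ x_le_y) _; rewrite ?nnegrE //.
  by rewrite ler_peMl ?exprn_ge0 //; lra.
have x_gt0 : 0 < x by lra.
have yd1_le : y ^+ d.-1 <= x ^+ d.-1 by rewrite lerXn2r ?nnegrE // ltW.
split => //; first by rewrite -{2}(prednK d_gt0) exprS ler_wpM2l.
have -> : (x ^+ d) ^+ d = x ^+ d * (x ^+ d) ^+ d.-1 by rewrite -exprS prednK.
rewrite exprMn mulrCA ltr_pM2l ?exprn_gt0 // [y ^+ _ ^+ _]exprAC.
have L_le : L <= L ^+ d.-1 by rewrite -{1}[L]expr1 ler_eXn2l // -ltnS prednK.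
apply: le_lt_trans (_ : (L * y ^+ d) ^+ d.-1 < _); last first.
  have d1_neq0 : d.-1 != 0%N by rewrite -lt0n -ltnS prednK.
  by rewrite ltrXn2r // mulr_ge0 ?exprn_ge0 //; lra.
by rewrite exprMn ler_wpM2r ?exprn_ge0.
Qed.

Lemma primitive_pair_step lam a b :
  abs lam <= 1 -> Num.max (abs a) (abs b) = 1 -> (abs lam < 1 -> abs a = 1) ->
  Num.max (abs (a ^+ d + lam * b ^+ d)) (abs (a * b ^+ d.-1)) = 1 /\
  (abs lam < 1 -> abs (a ^+ d + lam * b ^+ d) = 1).
Proof.
move=> lam_le1 ab1 lam_lt1.
have max_eq1_lt (x y : R) : Num.max x y = 1 -> y < 1 -> x = 1.
  by rewrite /Num.max; case: ifP => _; lra.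
have [a_le1 b_le1] : abs a <= 1 /\ abs b <= 1.
  by apply/andP; rewrite -ge_max ab1.
have ge0 := abs_ge0.
have lbd_le1 : abs (lam * b ^+ d) <= 1.
  by rewrite absM ?absX // mulr_ile1 ?exprn_ge0 ?exprn_ile1.
have unit_a' : abs (lam * b ^+ d) < 1 -> abs (a ^+ d + lam * b ^+ d) = 1.
  move=> lbd_lt1; suff a1 : abs a = 1 by rewrite abs_addl_eq ?absX // a1 expr1n.
  have [/lam_lt1 //|lam_ge1] := ltP (abs lam) 1.
  apply: (max_eq1_lt _ _ ab1); rewrite -(expr_lt1 d_gt0 (ge0 b)).
  by apply: le_lt_trans lbd_lt1; rewrite absM ?absX // ler_peMl ?exprn_ge0.
split; last first.
  move=> lam_lt1'; apply: unit_a'; rewrite absM ?absX //.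
  by apply: le_lt_trans lam_lt1'; rewrite ler_piMr ?exprn_ile1.
have a'_le1 : abs (a ^+ d + lam * b ^+ d) <= 1.
  by apply: le_trans (abs_ultra _ _) _; rewrite ge_max absX exprn_ile1.
have b'_le1 : abs (a * b ^+ d.-1) <= 1 by rewrite absM absX mulr_ile1 ?exprn_ge0 ?exprn_ile1.
apply: le_anti; rewrite ge_max a'_le1 b'_le1 le_max /=.
have [/unit_a' ->|lbd_ge1] := ltP (abs (lam * b ^+ d)) 1; first by rewrite lexx.
have lbd1 : abs (lam * b ^+ d) = 1 by apply: le_anti; rewrite lbd_le1.
have [lam1 bd1] : abs lam = 1 /\ abs b ^+ d = 1.
  move: lbd1; rewrite absM absX => lbd1.
  have := ge0 lam; have := exprn_ile1 d (ge0 b) b_le1; have := exprn_ge0 d (ge0 b).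
  by split; nra.
have b1 : abs b = 1 by apply/eqP; rewrite -(pexpr_eq1 d_gt0) ?bd1.
have [a_lt1|a_ge1] := ltP (abs a) 1.
  by rewrite addrC abs_addl_eq lbd1 ?lexx // absX (expr_lt1 d_gt0) ?ge0.
by rewrite absM absX b1 expr1n mulr1 a_ge1 orbT.
Qed.

Lemma good_pair_step lam a b :
  good_pair (abs lam) (abs a) (abs b) ->
  good_pair (abs lam) (abs (a ^+ d + lam * b ^+ d)) (abs (a * b ^+ d.-1)) /\
  Num.max (abs (a ^+ d + lam * b ^+ d)) (abs (a * b ^+ d.-1)) =
    Num.max (abs a) (abs b) ^+ d.
Proof.
rewrite /good_pair; case: ifP => [lam_gt1 dom|/negbT lam_le1 [ab1 lam_lt1]].
  have [b_lt_a b'_le dom'] := dominant_step lam_gt1 (abs_ge0 a) (abs_ge0 b) dom.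
  have ->: abs (a ^+ d + lam * b ^+ d) = abs a ^+ d.
    by rewrite abs_addl_eq absX // absM absX.
  by rewrite absM absX !max_l // ltW.
rewrite -leNgt in lam_le1.
have [-> unit_a'] := primitive_pair_step lam_le1 ab1 lam_lt1.
by rewrite ab1 expr1n.
Qed.

Lemma dominant_first_step lam a b i j :
  1 < abs lam -> abs a = abs lam ^+ i -> abs b = abs lam ^+ j ->
  good_pair (abs lam) (abs (a ^+ d + lam * b ^+ d)) (abs (a * b ^+ d.-1)).
Proof.
move=> lam_gt1 ai bj; rewrite /good_pair lam_gt1; set L := abs lam.
have ad : abs (a ^+ d) = L ^+ (i * d) by rewrite absX ai -exprM.
have lbd : abs (lam * b ^+ d) = L ^+ (j * d).+1 by rewrite absM absX bj -exprM exprS.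
have a'_eq : abs (a ^+ d + lam * b ^+ d) = L ^+ maxn (i * d) (j * d).+1.
  have [j_lt_i|i_le_j] := ltnP j i.
    have lt : ((j * d).+1 < i * d)%N by nia.
    by rewrite (maxn_idPl (ltnW lt)) abs_addl_eq ad // lbd ltr_eXn2l.
  have lt : (i * d < (j * d).+1)%N by rewrite ltnS leq_mul2r i_le_j orbT.
  by rewrite (maxn_idPr (ltnW lt)) addrC abs_addl_eq lbd // ad ltr_eXn2l.
rewrite a'_eq absM absX ai bj -/L -!exprM -exprD -exprM -exprS ltr_eXn2l //.
exact: dominant_exponent_lt.
Qed.

Lemma good_pair_ABc_succ (A B : {poly algC}) lam n : (1 <= n)%N ->
  good_pair (abs lam) (abs (Acn d A B n).[lam]) (abs (Bcn d A B n).[lam]) ->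
  good_pair (abs lam) (abs (Acn d A B n.+1).[lam]) (abs (Bcn d A B n.+1).[lam]) /\
  Mcnv abs d A B n.+1 lam = Mcnv abs d A B n lam ^+ d.
Proof.
by move=> n_ge1; rewrite /Mcnv; have [-> ->] := horner_ABc_succ d A B lam n_ge1; apply: good_pair_step.
Qed.

Section Orbit.

Variables (A B : {poly algC}) (lam : algC).
Hypotheses (intA : integral_poly A) (intB : integral_poly B).
Hypotheses (resAB : abs (resultant A B) = 1) (lcA : abs (lead_coef A) = 1).
Hypotheses (lcB : abs (lead_coef B) = 1) (A0_unit : A`_0 != 0 -> abs A`_0 = 1).
Hypothesis lam_neq0 : lam != 0.

Lemma max_horner_eq1 x : abs x <= 1 -> Num.max (abs A.[x]) (abs B.[x]) = 1.
Proof.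
move=> x_le1; apply: le_anti; rewrite ge_max !integral_horner_le1 //.
exact: unit_resultant_max_horner_ge1.
Qed.

Lemma good_pair_horner_step : (abs lam < 1 -> A.[0] != 0) ->
  good_pair (abs lam) (abs (A.[lam] ^+ d + lam * B.[lam] ^+ d))
                      (abs (A.[lam] * B.[lam] ^+ d.-1)).
Proof.
move=> A0_neq0; have [lam_gt1|lam_le1] := ltP 1 (abs lam).
  exact: dominant_first_step lam_gt1
    (integral_horner_unit_lead intA lcA lam_gt1) (integral_horner_unit_lead intB lcB lam_gt1).
apply: (proj1 (good_pair_step _)); rewrite /good_pair ltNge lam_le1 /=.
split; first exact: max_horner_eq1.
move=> lam_lt1; apply: integral_horner_unit_coef0 => //.
by apply: A0_unit; rewrite -horner_coef0 A0_neq0.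
Qed.

Lemma good_pair_ABc1_root : A.[0] = 0 -> abs lam < 1 ->
  good_pair (abs lam) (abs (Acn d A B 1).[lam]) (abs (Bcn d A B 1).[lam]).
Proof.
move=> A0 lam_lt1; have lam_gt0 := abs_gt0 lam_neq0.
have [] := horner_ABc1 A B lam d_gt0; rewrite A0 eqxx => eA eB.
have B0 : abs B`_0 = 1.
  have := @max_horner_eq1 0; rewrite abs0 ler01 A0 abs0 max_r ?abs_ge0 // horner_coef0.
  by apply.
have Bl : abs B.[lam] = 1 by apply: integral_horner_unit_coef0.
have Al : abs A.[lam] <= abs lam.
  by apply: integral_horner_le_abs; rewrite -?horner_coef0 // ltW.
have a'_eq : abs (A.[lam] ^+ d + lam * B.[lam] ^+ d) = abs lam.
  have lbd : abs (lam * B.[lam] ^+ d) = abs lam by rewrite absM absX Bl expr1n mulr1.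
  rewrite addrC abs_addl_eq lbd // absX.
  apply: le_lt_trans (lerXn2r _ _ _ Al) _; rewrite ?nnegrE ?abs_ge0 //.
  by rewrite ltr_iXnr.
have A1_eq1 : abs (Acn d A B 1).[lam] = 1.
  by apply: (mulIf (lt0r_neq0 lam_gt0)); rewrite -absM eA a'_eq mul1r.
have B1_le1 : abs (Bcn d A B 1).[lam] <= 1.
  rewrite -(ler_pM2r lam_gt0) -absM eB absM absX Bl expr1n mulr1 mul1r //.
rewrite /good_pair ltNge (ltW lam_lt1) /= A1_eq1 max_l //.
Qed.

Lemma good_pair_ABc1 :
  good_pair (abs lam) (abs (Acn d A B 1).[lam]) (abs (Bcn d A B 1).[lam]).
Proof.
have [/andP[/eqP A0 lam_lt1]|not_root] := boolP ((A.[0] == 0) && (abs lam < 1)).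
  exact: good_pair_ABc1_root.
have [eA eB] := horner_ABc1 A B lam d_gt0.
apply: (@good_pair_divr _ _ _ (abs (if A.[0] == 0 then lam else 1))).
- by case: ifP; rewrite ?abs1 ?ltr01 ?abs_gt0.
- move: not_root; case: eqP => _ /=; rewrite ?abs1 // -leNgt => lam_ge1 lam_le1.
  by apply: le_anti; rewrite lam_le1.
rewrite -!absM eA eB; apply: good_pair_horner_step => lam_lt1.
by apply: contraNneq not_root => ->; rewrite eqxx.
Qed.

Lemma Mcnv1_gt0 : 0 < Mcnv abs d A B 1 lam.
Proof. exact: good_pair_max_gt0 (abs_ge0 _) (abs_ge0 _) good_pair_ABc1. Qed.

Lemma Mcnv_succ_pow n :
  good_pair (abs lam) (abs (Acn d A B n.+1).[lam]) (abs (Bcn d A B n.+1).[lam]) /\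
  Mcnv abs d A B n.+1 lam = Mcnv abs d A B 1 lam ^+ (d ^ n).
Proof.
elim: n => [|n [good_n M_n]]; first by rewrite expn0 expr1; split; first exact: good_pair_ABc1.
have [good_n1 M_n1] := good_pair_ABc_succ (isT : (0 < n.+1)%N) good_n.
by rewrite M_n1 M_n -exprM -expnSr.
Qed.

End Orbit.

End NonarchimedeanAbs.

Theorem proposition4p3 (R : realType) (d : nat) (A B : {poly algC})
  (p : nat) (abs : algC -> R) :
  (2 <= d)%N ->
  A != 0 -> B != 0 -> coprimep A B ->
  is_padic_abs p abs ->
  (forall i, abs A`_i <= 1) ->
  (forall i, abs B`_i <= 1) ->
  abs (resultant A B) = 1 ->
  abs (lead_coef A) = 1 ->
  abs (lead_coef B) = 1 ->
  (A`_0 != 0 -> abs A`_0 = 1) ->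
  forall lam : algC, lam != 0 ->
  forall n : nat, (1 <= n)%N ->
    ln (Mcnv abs d A B n lam) / (d ^ n)%:R = ln (Mcnv abs d A B 1 lam) / d%:R.
Proof.
(* A, B != 0 and coprimality follow from the unit leading coefficients and resultant. *)
move=> d_ge2 _ _ _ habs intA intB resAB lcA lcB A0_unit lam lam_neq0 [|n] // _.
have M1_gt0 := Mcnv1_gt0 habs d_ge2 intA intB resAB lcA lcB A0_unit lam_neq0.
have [_ ->] := Mcnv_succ_pow habs d_ge2 intA intB resAB lcA lcB A0_unit lam_neq0 n.
have d_neq0 : d%:R != 0 :> R by rewrite pnatr_eq0 -lt0n ltnW.
rewrite lnXn // expnSr natrM -mulr_natr; field.
by rewrite d_neq0 natrX expf_neq0.
Qed.
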